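(* For all integers $n\ge 1$ and $m\ge 2$, \[ {n+m\brack m}-q^{n}{n+m-2\brack m-2}=K_q(n+m-1,m). \]
   Context: For integers $n\ge m\ge 0$ the Gaussian polynomial is ${n\brack m}=\prod_{i=0}^{m-1}\frac{1-q^{n-i}}{1-q^{m-i}}$. For $n\geq 1$ and $0\le m\le n$, the $q$-Kaplansky number is $K_q(n,m)=\frac{1-q^{n+m}}{1-q^{n}}{n\brack m}$. *)

From mathcomp Require Import all_boot all_order all_algebra.
From mathcomp Require Import fraction.
Set Implicit Arguments. Unset Strict Implicit. Unset Printing Implicit Defensive.
Import GRing.Theory.
Local Open Scope ring_scope.

Definition gauss (F : fieldType) (q : F) (n m : nat) : F :=
  \prod_(i < m) ((1 - q ^+ (n - i)) / (1 - q ^+ (m - i))).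

Definition qKaplansky (F : fieldType) (q : F) (n m : nat) : F :=
  (1 - q ^+ (n + m)) / (1 - q ^+ n) * gauss q n m.

Definition qX : {fraction {poly rat}} := @FracField.tofrac {poly rat} 'X.

From mathcomp Require Import all_boot all_order all_algebra.
From mathcomp Require Import fraction.
From mathcomp Require Import ring zify.
Import GRing.Theory.
Local Open Scope ring_scope.

(* With m = k + 2, the numerator products of the three Gaussian coefficients
   share the k factors 1 - q^(n+k-i), i < k, and their denominators share
   prod_(i<k) (1 - q^(k-i)). Peeling off the remaining factors reduces the
   statement to the polynomial identity [subX_identity]; the hypothesis that q
   is not a root of unity only keeps the denominators nonzero. *)

Lemma subX_identity (R : comPzRingType) (q : R) (n k : nat) :
  (1 - q ^+ (n + k.+2)) * (1 - q ^+ (n + k.+1))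
    - q ^+ n * ((1 - q ^+ k.+2) * (1 - q ^+ k.+1))
  = (1 - q ^+ n) * (1 - q ^+ (n + k.+1 + k.+2)).
Proof. by rewrite !exprD !exprS; ring. Qed.

Section GaussianIdentity.

Variables (F : fieldType) (q : F).
Hypothesis subX_neq0 : forall k : nat, (0 < k)%N -> 1 - q ^+ k != 0.

Let c (k : nat) := 1 - q ^+ k.

Lemma gaussE N m :
  gauss q N m = (\prod_(i < m) c (N - i)) / \prod_(i < m) c (m - i).
Proof. by rewrite /gauss prodf_div. Qed.

Lemma prod_recl2 N k :
  \prod_(i < k.+2) c (N + k.+2 - i)
  = c (N + k.+2) * c (N + k.+1) * \prod_(i < k) c (N + k - i).
Proof.
rewrite !big_ord_recl /= subn0 mulrA /bump /=; congr (_ * c _ * _); first lia.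
by apply: eq_bigr => i _; congr c; lia.
Qed.

Lemma prod_recl_recr N k :
  \prod_(i < k.+2) c (N + k.+1 - i)
  = c (N + k.+1) * \prod_(i < k) c (N + k - i) * c N.
Proof.
rewrite big_ord_recl big_ord_recr /= subn0 mulrA /bump /=; congr (_ * _ * c _); last lia.
by apply: eq_bigr => i _; congr c; lia.
Qed.

Lemma prod_subX_neq0 k : \prod_(i < k) c (k - i) != 0.
Proof.
rewrite prodf_seq_neq0; apply/allP => i _ /=; apply: subX_neq0.
by rewrite subn_gt0.
Qed.

Lemma gauss_sub_qKaplansky n k : (0 < n)%N ->
  gauss q (n + k.+2) k.+2 - q ^+ n * gauss q (n + k) k
  = qKaplansky q (n + k.+1) k.+2.
Proof.
move=> n_gt0; rewrite /qKaplansky !gaussE prod_recl2 prod_recl_recr.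
have -> : \prod_(i < k.+2) c (k.+2 - i) = c k.+2 * c k.+1 * \prod_(i < k) c (k - i).
  exact: (prod_recl2 0).
set P := \prod_(i < k) c (n + k - i); set D := \prod_(i < k) c (k - i).
have D_neq0 : D != 0 := prod_subX_neq0 k.
clearbody P D.
have c2_neq0 : c k.+2 != 0 by apply: subX_neq0.
have c1_neq0 : c k.+1 != 0 by apply: subX_neq0.
have cN_neq0 : c (n + k.+1) != 0 by apply: subX_neq0; rewrite addnS.
rewrite [RHS](_ : _ = c n * c (n + k.+1 + k.+2) * P / (c k.+2 * c k.+1 * D));
  last by rewrite /c; field; rewrite cN_neq0 c2_neq0 c1_neq0 D_neq0.
rewrite -subX_identity; rewrite /c; field.
by rewrite c2_neq0 c1_neq0 D_neq0.
Qed.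

End GaussianIdentity.

Lemma qX_subX_neq0 (k : nat) : (0 < k)%N -> 1 - qX ^+ k != 0.
Proof.
move=> k_gt0.
have -> : 1 - qX ^+ k = FracField.tofrac (1 - 'X^k : {poly rat}).
  by rewrite /qX rmorphB rmorph1 rmorphXn.
rewrite tofrac_eq0.
apply/eqP => /(congr1 (horner^~ 0)).
by rewrite !hornerE expr0n gtn_eqF // subr0 => /eqP; rewrite oner_eq0.
Qed.

Theorem mainTheorem4 (n m : nat) (hn : (1 <= n)%N) (hm : (2 <= m)%N) :
  gauss qX (n + m) m - qX ^+ n * gauss qX (n + m - 2) (m - 2)
  = qKaplansky qX (n + m - 1) m.
Proof.
case: m hm => [|[|k]] // _.
have -> : (n + k.+2 - 2 = n + k)%N by lia.
have -> : (n + k.+2 - 1 = n + k.+1)%N by lia.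
rewrite subSS subn1.
exact: gauss_sub_qKaplansky qX_subX_neq0 n k hn.
Qed.
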